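(* Let $p\ge0$ be an integer, $n=2p+1$ and $R>0$. Let $D$ be the determinant of the $(p+2)\times(p+2)$ matrix whose rows indexed by $i=0,\dots,p$ are $\bigl(\chi_{p+i},\ \delta\chi_{p+i},\ \delta^2\chi_{p+i},\ \dots,\ \delta^p\chi_{p+i},\ 0\bigr)$ and whose last row is $\bigl(-nR^{n-1},0,\dots,0,n!\bigr)$, all functions evaluated at $R$. Then \[D=n!\,R^{(p+1)p/2}\det[\chi_{i+j}(R)]_{i,j=0}^p.\]
   Context: The reverse Bessel polynomials are $\chi_0=1$, $\chi_1=R$, $\chi_{i+2}=R^2\chi_i+(2i+1)\chi_{i+1}$. The operator $\delta$ on functions of $R>0$ is $\delta f(R)=e^{R}R^{2p}\frac{\mathrm d}{\mathrm dR}\bigl(e^{-R}R^{-2p}f(R)\bigr)$, and $\delta^j$ is its $j$-fold iterate. *)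

From Stdlib Require Import Reals.
From Coquelicot Require Import Coquelicot.
From mathcomp Require Import all_boot all_order all_algebra.
From mathcomp Require Import Rstruct.

Set Implicit Arguments.
Unset Strict Implicit.
Unset Printing Implicit Defensive.

Local Open Scope R_scope.

(* Reverse Bessel polynomials as functions of R:
   chi_0 = 1, chi_1 = R, chi_{i+2} = R^2 chi_i + (2i+1) chi_{i+1}. *)
Fixpoint chi_pair (i : nat) (x : R) : R * R :=
  match i with
  | O => (1, x)
  | S k => let (a, b) := chi_pair k x in
           (b, x ^ 2 * a + INR (2 * k + 1) * b)
  end.

Definition chi (i : nat) (x : R) : R := fst (chi_pair i x).

Definition delta (p : nat) (f : R -> R) : R -> R :=
  fun x => exp x * x ^ (2 * p) *
           Derive (fun y => exp (- y) * / (y ^ (2 * p)) * f y) x.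

Definition delta_iter (p j : nat) (f : R -> R) : R -> R :=
  Nat.iter j (delta p) f.

Definition lemma5p2_entry (p : nat) (x : R) (i j : nat) : R :=
  let n := (2 * p + 1)%nat in
  if (i <=? p)%nat then
    (if (j <=? p)%nat then delta_iter p j (chi (p + i)) x else 0)
  else
    (if (j =? 0)%nat then - (INR n * x ^ (n - 1))
     else if (j =? p + 1)%nat then INR (n`!) else 0).

Definition lemma5p2_matrix (p : nat) (x : R) : 'M[R]_(p.+2) :=
  \matrix_(i < p.+2, j < p.+2) lemma5p2_entry p x i j.

Definition hankel_chi (p : nat) (x : R) : 'M[R]_(p.+1) :=
  \matrix_(i < p.+1, j < p.+1) chi (i + j) x.

From Stdlib Require Import Reals.
From Coquelicot Require Import Coquelicot.
From mathcomp Require Import all_boot all_order all_algebra.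
From mathcomp Require Import Rstruct ring zify.

Import GRing.Theory Num.Theory.
Local Open Scope ring_scope.

(* Expanding along the last column gives D = n! det A with A_(i,j) = delta^j chi_(p+i).
   Since delta chi_m = ((1 - 2p)/R) chi_m - R chi_(m-1), induction on j gives
   delta^j chi_k = \sum_(l <= j) c_(j,l) chi_(k-l) with rational coefficients c_(j,l)
   and c_(j,j) = (-R)^j.  Hence A = H V with H = [chi_(i+j)] and V_(m,j) = c_(j,p-m),
   which vanishes above the antidiagonal, so
   det V = (-1)^(p(p+1)/2) (-R)^(p(p+1)/2) = R^(p(p+1)/2). *)

Lemma is_derive_sum (I : Type) (r : seq I) (P : pred I) (F : I -> R -> R) (dF : I -> R) y :
  (forall i, P i -> is_derive (F i) y (dF i)) ->
  is_derive (fun z => \sum_(i <- r | P i) F i z) y (\sum_(i <- r | P i) dF i).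
Proof.
move=> hF; elim: r => [|i r IH].
  rewrite big_nil; apply: (@is_derive_ext R_AbsRing R_NormedModule (fun _ => 0)).
    by move=> z; rewrite big_nil.
  exact: is_derive_const.
rewrite big_cons; case: ifP => Pi.
  apply: (@is_derive_ext R_AbsRing R_NormedModule
            (fun z => F i z + \sum_(j <- r | P j) F j z)).
    by move=> z; rewrite big_cons Pi.
  exact: is_derive_plus (hF i Pi) IH.
apply: (@is_derive_ext R_AbsRing R_NormedModule (fun z => \sum_(j <- r | P j) F j z)) => //.
by move=> z; rewrite big_cons Pi.
Qed.

Lemma det_anti_trig (T : comPzRingType) n (W : 'M[T]_n.+1) :
  (forall i j : 'I_n.+1, (i + j < n)%N -> W i j = 0) ->
  \det W = (-1) ^+ 'C(n.+1, 2) * \prod_i W i (rev_ord i).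
Proof.
elim: n W => [|n IH] W W0.
  by rewrite det_mx11 big_ord1 bin_small // expr0 mul1r [rev_ord _]ord1.
rewrite (expand_det_row _ ord0) big_ord_recr /= big1 ?add0r => [|j _]; last first.
  by rewrite W0 ?mul0r //= add0n ltn_ord.
rewrite /cofactor IH => [|i j hij]; last first.
  have jn : (n < j)%N = false by rewrite ltnNge -ltnS ltn_ord.
  by rewrite !mxE W0 //= /bump leq0n jn add1n add0n addSn ltnS.
have rev0 : rev_ord (ord0 : 'I_n.+2) = ord_max by apply: val_inj; rewrite /= subn1.
have revS i : lift ord_max (rev_ord i) = rev_ord (lift ord0 i) :> 'I_n.+2.
  by apply: val_inj; rewrite /= /bump leq0n ltnNge -ltnS rev_ord_proof /=; lia.
under eq_bigr do rewrite !mxE revS.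
have sign : 'C(n.+2, 2) = (n.+1 + 'C(n.+1, 2))%N by rewrite binS bin1 addnC.
by rewrite [in RHS]big_ord_recl rev0 sign !exprD /= expr0 mul1r; ring.
Qed.

Lemma natlebE m n : (m <=? n)%nat = (m <= n)%N.
Proof. exact: sameP (Nat.leb_spec0 m n) leP. Qed.

Lemma nateqbE m n : (m =? n)%nat = (m == n).
Proof. exact: sameP (Nat.eqb_spec m n) eqP. Qed.

Lemma chi0 y : chi 0 y = 1. Proof. by []. Qed.
Lemma chi1 y : chi 1 y = y. Proof. by []. Qed.

Lemma chiSS k y : chi k.+2 y = y ^+ 2 * chi k y + (2 * k + 1)%:R * chi k.+1 y.
Proof.
by rewrite /chi /=; case: chi_pair => a b; rewrite /= INRE !RmultE RplusE R1E mulr1 expr2.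
Qed.

(* chi_(m+1) = y theta_m for the classical reverse Bessel polynomials theta,
   and theta_m' = theta_m - y theta_(m-1). *)
Lemma is_derive_chi m (y : R) : y != 0 ->
  is_derive (chi m.+1) y (chi m.+1 y * (1 + y^-1) - y * chi m y).
Proof.
move=> y0.
have chi_step k (dk dk1 : R) : is_derive (chi k) y dk -> is_derive (chi k.+1) y dk1 ->
    is_derive (chi k.+2) y
      ((1 * y + y * 1) * chi k y + y * y * dk + (2 * k + 1)%:R * dk1).
  move=> hk hk1.
  have hsq : is_derive (fun z : R => z * z) y (1 * y + y * 1).
    by apply: is_derive_mult; [exact: is_derive_id | exact: is_derive_id | exact: mulrC].
  apply: (@is_derive_ext R_AbsRing R_NormedModule
            (fun z : R => z * z * chi k z + (2 * k + 1)%:R * chi k.+1 z)).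
    by move=> z; rewrite chiSS expr2.
  exact: is_derive_plus (is_derive_mult _ _ _ _ _ hsq hk (fun a b => mulrC a b))
                        (is_derive_scal _ _ (2 * k + 1)%:R _ hk1).
have chi0' : is_derive (chi 0) y 0 := is_derive_const (1 : R) y.
have chi1' : is_derive (chi 1) y (chi 1 y * (1 + y^-1) - y * chi 0 y).
  rewrite chi1 chi0 (_ : _ - _ = 1); last by field.
  by apply: (@is_derive_ext R_AbsRing R_NormedModule id) => //; exact: is_derive_id.
suff [] : is_derive (chi m.+1) y (chi m.+1 y * (1 + y^-1) - y * chi m y) /\
  is_derive (chi m.+2) y (chi m.+2 y * (1 + y^-1) - y * chi m.+1 y) by [].
elim: m => [|m [IH IH1]].
  split=> //.
  apply: (eq_ind _ (is_derive _ y) (chi_step _ _ _ chi0' chi1')).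
  by rewrite chiSS chi1 chi0; field.
split=> //.
apply: (eq_ind _ (is_derive _ y) (chi_step _ _ _ IH IH1)).
by rewrite (chiSS m.+1) chiSS; field.
Qed.

Lemma deltaE p f (y df : R) : y != 0 -> is_derive f y df ->
  delta p f y = df - (1 + (2 * p)%:R / y) * f y.
Proof.
move=> y0 hf.
have yn0 : y ^+ (2 * p) != 0 by rewrite expf_neq0.
have pow_pred n : n%:R * y ^+ n.-1 = n%:R * y ^+ n / y.
  by case: n => [|n]; rewrite ?mul0r // exprS; field.
have hw : is_derive (fun z => Rmult (exp (Ropp z)) (Rinv (pow z (2 * p)))) y
    (- exp (- y) / y ^+ (2 * p) * (1 + (2 * p)%:R / y)).
  auto_derive; first by rewrite RpowE; apply/eqP.
  rewrite !RmultE !RplusE !RoppE !RinvE !RpowE INRE R1E pow_pred.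
  by field; rewrite y0 yn0.
rewrite /delta (is_derive_unique _ _ _ (is_derive_mult _ _ _ _ _ hw hf (fun a b => mulrC a b))).
rewrite /plus /mult /= ?RmultE ?RplusE RpowE exp_Ropp !RinvE.
have e0 : exp y != 0 by apply/eqP/Rgt_not_eq/exp_pos.
by field; rewrite e0 y0 yn0.
Qed.

(* Syntax for rational functions of y, so that the coefficients c_(j,l) can be
   differentiated again and again. *)
Inductive rexpr : Type :=
  | RCst of R
  | RVar
  | RInv
  | RAdd of rexpr & rexpr
  | RMul of rexpr & rexpr.

(* Otherwise constants would be read in R_scope, the scope bound to R. *)
Arguments RCst c%_ring_scope.

Fixpoint reval (e : rexpr) (y : R) :=
  match e with
  | RCst c => c
  | RVar => y
  | RInv => y^-1
  | RAdd a b => reval a y + reval b y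
  | RMul a b => reval a y * reval b y
  end.

Fixpoint rderiv (e : rexpr) : rexpr :=
  match e with
  | RCst _ => RCst 0
  | RVar => RCst 1
  | RInv => RMul (RCst (-1)) (RMul RInv RInv)
  | RAdd a b => RAdd (rderiv a) (rderiv b)
  | RMul a b => RAdd (RMul (rderiv a) b) (RMul a (rderiv b))
  end.

Lemma is_derive_reval e (y : R) : y != 0 -> is_derive (reval e) y (reval (rderiv e) y).
Proof.
move=> y0; elim: e => [c||| a IHa b IHb | a IHa b IHb] /=.
- exact: is_derive_const.
- exact: is_derive_id.
- apply: (eq_ind _ (is_derive _ y) (is_derive_inv _ _ _ (is_derive_id y) (elimN eqP y0))).
  by rewrite /Hierarchy.one /= RdivE RoppE !RmultE R1E; field.
- exact: is_derive_plus IHa IHb.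
- exact: is_derive_mult IHa IHb (fun u v => mulrC u v).
Qed.

Section DeltaExpansion.

Variable p : nat.

(* By deltaE and is_derive_chi, delta (c chi_m) = (c' + (1 - 2p) c / y) chi_m - y c chi_(m-1);
   this is the recursion for the coefficients c_(j,l) of delta^j chi_k. *)
Fixpoint delta_coef (j l : nat) : rexpr :=
  if (j < l)%N then RCst 0 else
  if j is j'.+1 then
    RAdd (RAdd (rderiv (delta_coef j' l))
               (RMul (RCst (1 - (2 * p)%:R)) (RMul RInv (delta_coef j' l))))
         (if l is l'.+1 then RMul (RCst (-1)) (RMul RVar (delta_coef j' l')) else RCst 0)
  else RCst 1.

Lemma delta_coef_gt j l : (j < l)%N -> delta_coef j l = RCst 0.
Proof. by case: j => [|j] /= ->. Qed.

Lemma reval_delta_coef_diag j y : reval (delta_coef j j) y = (- y) ^+ j.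
Proof.
elim: j => // j IH; rewrite /= ltnn delta_coef_gt //= IH exprS; ring.
Qed.

Lemma sum_delta_coef_succ j y (u : nat -> R) :
  \sum_(l < j.+2) reval (delta_coef j.+1 l) y * u l =
  \sum_(l < j.+1) ((reval (rderiv (delta_coef j l)) y
                     + (1 - (2 * p)%:R) * y^-1 * reval (delta_coef j l) y) * u l
                   - y * reval (delta_coef j l) y * u l.+1).
Proof.
set c := fun l => reval (delta_coef j l) y.
set A := fun l => reval (rderiv (delta_coef j l)) y + (1 - (2 * p)%:R) * y^-1 * c l.
set B := fun l => if l is l'.+1 then y * c l' else 0.
transitivity (\sum_(l < j.+2) (A l * u l - B l * u l)).
  apply: eq_bigr => l _; rewrite /= ltnNge -ltnS ltn_ord /A /B /c.
  by case: (nat_of_ord l) => [|l'] /=; ring.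
rewrite sumrB [X in X - _]big_ord_recr [X in _ - X]big_ord_recl sumrB /=.
rewrite /A /c delta_coef_gt //= mulr0 addr0 !mul0r addr0 add0r.
by congr (_ - _); apply: eq_bigr.
Qed.

Lemma delta_iter_chi j k (y : R) : (j <= k)%N -> y != 0 ->
  delta_iter p j (chi k) y = \sum_(l < j.+1) reval (delta_coef j l) y * chi (k - l) y.
Proof.
elim: j y => [|j IH] y jk y0; first by rewrite big_ord1 subn0 /= mul1r.
set c := fun l => reval (delta_coef j l) y.
have hG : is_derive (delta_iter p j (chi k)) y
    (\sum_(l < j.+1) (reval (rderiv (delta_coef j l)) y * chi (k - l) y
       + c l * (chi (k - l) y * (1 + y^-1) - y * chi (k - l.+1) y))).
  apply: (is_derive_ext_loc
            (fun z => \sum_(l < j.+1) reval (delta_coef j l) z * chi (k - l) z)).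
    have hy : locally y (fun z : R => z <> 0) := open_neq 0 y (elimN eqP y0).
    apply: filter_imp hy => z /eqP z0.
    by rewrite IH // ltnW.
  apply: is_derive_sum => l _.
  have lk : (l < k)%N by rewrite (leq_trans _ jk) // ltn_ord.
  apply: is_derive_mult; [exact: is_derive_reval | | exact: mulrC].
  by rewrite -(subnSK lk); apply: is_derive_chi.
have -> : delta_iter p j.+1 (chi k) y = delta p (delta_iter p j (chi k)) y by [].
rewrite (deltaE p _ _ _ y0 hG) (IH y (ltnW jk) y0).
rewrite (sum_delta_coef_succ j y (fun l => chi (k - l) y)) mulr_sumr -sumrB.
by apply: eq_bigr => l _; rewrite /c; ring.
Qed.

End DeltaExpansion.

Definition delta_chi_matrix p (x : R) : 'M[R]_p.+1 :=
  \matrix_(i, j) delta_iter p j (chi (p + i)) x.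

Definition delta_coef_matrix p (x : R) : 'M[R]_p.+1 :=
  \matrix_(m, j) reval (delta_coef p j (p - m)) x.

Section Lemma5p2Entries.
Variables (p : nat) (x : R).

Lemma lemma5p2_entry_top i j : (i <= p)%N -> (j <= p)%N ->
  lemma5p2_entry p x i j = delta_iter p j (chi (p + i)) x.
Proof. by move=> ip jp; rewrite /lemma5p2_entry !natlebE ip jp. Qed.

Lemma lemma5p2_entry_top_last i : (i <= p)%N -> lemma5p2_entry p x i p.+1 = 0.
Proof. by move=> ip; rewrite /lemma5p2_entry !natlebE ip ltnn. Qed.

Lemma lemma5p2_entry_corner : lemma5p2_entry p x p.+1 p.+1 = (2 * p + 1)`!%:R.
Proof. by rewrite /lemma5p2_entry natlebE ltnn !nateqbE [(p + 1)%N]addn1 eqxx /= INRE. Qed.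

End Lemma5p2Entries.

Lemma det_lemma5p2_matrix p x :
  \det (lemma5p2_matrix p x) = (2 * p + 1)`!%:R * \det (delta_chi_matrix p x).
Proof.
rewrite (expand_det_col _ ord_max) big_ord_recr /= big1 ?add0r => [|i _]; last first.
  by rewrite mxE (lemma5p2_entry_top_last p x i (ltn_ord i)) mul0r.
rewrite mxE lemma5p2_entry_corner /cofactor addnn -signr_odd odd_double expr0 mul1r.
congr (_ * \det _); apply/matrixP => i j.
by rewrite !mxE !lift_max (lemma5p2_entry_top p x i j (ltn_ord i) (ltn_ord j)).
Qed.

Lemma delta_chi_matrix_factor p (x : R) : x != 0 ->
  delta_chi_matrix p x = hankel_chi p x *m delta_coef_matrix p x.
Proof.
move=> x0; apply/matrixP => i j; rewrite !mxE.
have jpi : (j <= p + i)%N by rewrite (leq_trans _ (leq_addr i p)) // -ltnS.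
rewrite (delta_iter_chi p j (p + i) x jpi x0).
rewrite (big_ord_widen p.+1 (fun l => reval (delta_coef p j l) x * chi (p + i - l) x))
  ?ltn_ord //.
rewrite big_mkcond (reindex_inj rev_ord_inj); apply: eq_bigr => m _ /=.
rewrite !mxE subSS; case: ltnP => [_ | jm].
  have -> : (p + i - (p - m) = i + m)%N by have := ltn_ord m; lia.
  exact: mulrC.
by rewrite delta_coef_gt // mulr0.
Qed.

Lemma det_delta_coef_matrix p (x : R) : \det (delta_coef_matrix p x) = x ^+ 'C(p.+1, 2).
Proof.
rewrite det_anti_trig => [|i j ij]; last first.
  rewrite mxE delta_coef_gt //; lia.
under eq_bigr do rewrite mxE reval_delta_coef_diag.
rewrite prodrXr.
have -> : (\sum_(i < p.+1) rev_ord i)%N = 'C(p.+1, 2).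
  rewrite -bin2_sum big_mkord (reindex_inj rev_ord_inj).
  by apply: eq_bigr => i _; rewrite rev_ordK.
by rewrite -exprMn mulN1r opprK.
Qed.

Theorem lemma5p2 (p : nat) (x : R) (hx : 0 < x) :
  \det (lemma5p2_matrix p x) =
  (2 * p + 1)`!%:R * x ^+ (((p + 1) * p) %/ 2)%N * \det (hankel_chi p x).
Proof.
have x0 : x != 0 := lt0r_neq0 hx.
have -> : ((p + 1) * p %/ 2)%N = 'C(p.+1, 2) by rewrite bin2 addn1 divn2.
rewrite det_lemma5p2_matrix delta_chi_matrix_factor // det_mulmx det_delta_coef_matrix.
by rewrite [\det _ * _]mulrC mulrA.
Qed.
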